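(* Let $0\le\eta_1\le\eta_2\le1$ and $T\ge0$, and assume that $(D_tP(t,T,\eta_i))_{0\le t\le T}$ is a $\mathbb{Q}$-martingale for $i=1,2$. Then for all $t\in[0,T]$, $$\mathbb{Q}\big(P(t,T,\eta_1)\le P(t,T,\eta_2)\big)=1.$$
   Context: Let $(\Omega,\mathcal{F},(\mathcal{F}_t)_{t\ge0},\mathbb{Q})$ be a filtered probability space. $L=(L_t)$ is an adapted, càdlàg, non-decreasing pure-jump process with values in $[0,1]$ (the loss/quality process). The discount factor is $D_t:=\exp(-\int_0^tr_sds)$ for a progressively measurable, locally integrable real short-rate process $(r_s)$. Bond prices are $P(t,T,\eta):=1_{\{L_t\le\eta\}}\exp\big(-\int_t^Tf(t,u,\eta)du\big)$, $0\le t\le T$, $\eta\in[0,1]$, for a real-valued forward rate field $f$ (so that $P(T,T,\eta)=1_{\{L_T\le\eta\}}$). *)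

From HB Require Import structures.
From mathcomp Require Import all_boot all_order all_algebra.
From mathcomp Require Import all_classical all_reals all_analysis.
Set Implicit Arguments. Unset Strict Implicit. Unset Printing Implicit Defensive.
Import Order.TTheory GRing.Theory Num.Theory.
Import numFieldNormedType.Exports.
Local Open Scope classical_set_scope.
Local Open Scope ring_scope.

Section defs.
Context {d : measure_display} {Omega : measurableType d} {R : realType}.

Definition filtration (F : R -> set (set Omega)) : Prop :=
  (forall t, sigma_algebra setT (F t) /\ F t `<=` measurable) /\
  (forall s t, s <= t -> F s `<=` F t).

Definition meas_wrt (G : set (set Omega)) (X : Omega -> R) : Prop :=
  forall B : set R, measurable B -> G (X @^-1` B).

Definition adapted (F : R -> set (set Omega)) (X : R -> Omega -> R) : Prop :=
  forall t, 0 <= t -> meas_wrt (F t) (X t).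

Definition cadlag (X : R -> Omega -> R) : Prop :=
  forall w t, 0 <= t ->
    (X^~ w x @[x --> t^'+] --> X t w) /\
    (0 < t -> cvg (X^~ w x @[x --> t^'-])).

Definition left_lim (X : R -> Omega -> R) (w : Omega) (s : R) : R :=
  lim (X^~ w x @[x --> s^'-]).

Definition pure_jump (X : R -> Omega -> R) : Prop :=
  forall w t, 0 <= t ->
    (X t w - X 0 w)%:E =
     \esum_(s in `]0, t]%classic) (X s w - left_lim X w s)%:E.

(** Progressive measurability: for each t >= 0, (s, w) |-> r s w restricted to
    [0,t] x Omega is B([0,t]) (x) F_t - measurable. *)
Definition rectangles (F : R -> set (set Omega)) (t : R) : set (set (R * Omega)) :=
  [set X | exists A C, [/\ measurable A, A `<=` `[0, t]%classic, F t C &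
                            X = A `*` C]].

Definition progressive (F : R -> set (set Omega)) (r : R -> Omega -> R) : Prop :=
  forall t, 0 <= t -> forall B : set R, measurable B ->
    <<s `[0, t]%classic `*` setT, rectangles F t >>
      ((`[0, t]%classic `*` setT) `&` ((fun p => r p.1 p.2) @^-1` B)).

Definition paths_locally_integrable (r : R -> Omega -> R) : Prop :=
  forall w t, 0 <= t ->
    (@lebesgue_measure R).-integrable `[0, t]%classic (fun s => (r s w)%:E).

Definition discount_factor (r : R -> Omega -> R) (t : R) (w : Omega) : R :=
  expR (- \int[@lebesgue_measure R]_(s in `[0, t]%classic) r s w).

Definition bond_price (L : R -> Omega -> R) (f : R -> R -> R -> Omega -> R)
    (t T eta : R) (w : Omega) : R :=
  (L t w <= eta)%R%:R *
  expR (- \int[@lebesgue_measure R]_(u in `[t, T]%classic) f t u eta w).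

(** (M_t)_{0 <= t <= T} is a Q-martingale w.r.t. F: adapted, integrable, and
    E[M_t | F_s] = M_s, i.e. int_A M_t dQ = int_A M_s dQ for all A in F_s. *)
Definition martingale_on (Q : probability Omega R) (F : R -> set (set Omega))
    (T : R) (M : R -> Omega -> R) : Prop :=
  (forall t, 0 <= t <= T ->
     meas_wrt (F t) (M t) /\ Q.-integrable setT (fun w => (M t w)%:E)) /\
  (forall s t, 0 <= s -> s <= t -> t <= T -> forall A, F s A ->
     (\int[Q]_(w in A) (M t w)%:E = \int[Q]_(w in A) (M s w)%:E)%E).

End defs.

From HB Require Import structures.
From mathcomp Require Import all_boot all_order all_algebra.
From mathcomp Require Import all_classical all_reals all_analysis.
From mathcomp Require Import measurable_realfun.
Import Order.TTheory GRing.Theory Num.Theory.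
Import numFieldNormedType.Exports.
Local Open Scope classical_set_scope.
Local Open Scope ring_scope.

(** At maturity the bond prices are the indicators [1_{L_T <= eta}], which
    increase with [eta]. The discounted prices are martingales, so on the
    event [A = {D_t P(t,T,eta2) < D_t P(t,T,eta1)}], which belongs to [F_t],
    integrating the terminal inequality gives
    [int_A D_t P(t,T,eta1) <= int_A D_t P(t,T,eta2)], although the integrand on
    the left is strictly larger on [A]; hence [Q A = 0]. Since [D_t > 0], the
    complement of [A] is the event of the theorem. *)

Section sub_sigma_algebra.
Context {d : measure_display} {Omega : measurableType d} {R : realType}.
Variable G : set (set Omega).
Hypothesis sG : sigma_algebra setT G.

Lemma meas_wrt_measurable_fun (X : Omega -> R) :
  meas_wrt G X -> measurable_fun (T := g_sigma_algebraType G) setT X.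
Proof. by move=> mX _ B mB; rewrite setTI; apply: sub_sigma_algebra; exact: mX. Qed.

Lemma meas_wrt_lt (X Y : Omega -> R) :
  meas_wrt G X -> meas_wrt G Y -> G [set w | X w < Y w].
Proof.
move=> /meas_wrt_measurable_fun mX /meas_wrt_measurable_fun mY.
rewrite -(measurable_g_measurableTypeE sG).
by have := measurable_fun_ltr mX mY measurableT (Y := [set true]) I; rewrite setTI.
Qed.

End sub_sigma_algebra.

Lemma integral_le_on_lt_measure0 {d : measure_display} {T : measurableType d}
    {R : realType} (mu : measure T R) {A : set T} {g h : T -> R} :
  measurable A -> mu.-integrable A (EFin \o g) -> mu.-integrable A (EFin \o h) ->
  (forall w, A w -> h w < g w) ->
  (\int[mu]_(w in A) (g w)%:E <= \int[mu]_(w in A) (h w)%:E)%E ->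
  mu A = 0%E.
Proof.
move=> mA ig ih hltg le_gh.
have int_abs0 : (\int[mu]_(w in A) `|(g w - h w)%:E| = 0)%E.
  apply/eqP; rewrite eq_le integral_ge0 ?andbT; last by move=> w _; exact: abse_ge0.
  rewrite (eq_integral (fun w => (g w)%:E - (h w)%:E)%E); last first.
    by move=> w /[!inE] Aw /=; rewrite ger0_norm // subr_ge0 ltW // hltg.
  by rewrite (integralB_EFin mA) // sube_le0.
have mgh : measurable_fun A (fun w => (g w - h w)%:E).
  by apply/measurable_EFinP; apply: measurable_funB; apply/measurable_EFinP;
    [exact: measurable_int ig | exact: measurable_int ih].
have [N [mN muN0 AN]] := (ae_eq_integral_abs mu mA mgh).1 int_abs0.
apply/eqP; rewrite eq_le measure_ge0 andbT -muN0 le_measure ?inE //.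
move=> w Aw; apply: AN => /(_ Aw) [] /eqP; rewrite subr_eq0 => /eqP ghw.
by move: (hltg w Aw); rewrite ghw ltxx.
Qed.

Section martingale_comparison.
Context {d : measure_display} {Omega : measurableType d} {R : realType}.
Variables (Q : probability Omega R) (F : R -> set (set Omega)) (T : R).
Variables (M1 M2 : R -> Omega -> R).
Hypotheses (hF : filtration F)
  (mart1 : martingale_on Q F T M1) (mart2 : martingale_on Q F T M2).

Lemma martingale_le_terminal :
  (forall w, M1 T w <= M2 T w) ->
  forall t, 0 <= t <= T -> Q [set w | M1 t w <= M2 t w] = 1%E.
Proof.
move=> leT t /andP[t0 tT].
have [[sFt Ft_meas] T0] := (hF.1 t, le_trans t0 tT).
have [[mM1t iM1t] [mM2t iM2t]] := (mart1.1 t (andb_true_intro (conj t0 tT)),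
                                  mart2.1 t (andb_true_intro (conj t0 tT))).
have [[_ iM1T] [_ iM2T]] := (mart1.1 T (andb_true_intro (conj T0 (lexx T))),
                            mart2.1 T (andb_true_intro (conj T0 (lexx T)))).
pose A := [set w | M2 t w < M1 t w].
have FA : F t A by exact: meas_wrt_lt.
have mA : measurable A by exact: Ft_meas.
have onA M : Q.-integrable setT (fun w => (M w)%:E) -> Q.-integrable A (EFin \o M).
  by move=> iM; apply: (integrableS measurableT mA (@subsetT _ A)).
have QA0 : Q A = 0%E.
  apply: (integral_le_on_lt_measure0 Q mA (onA _ iM1t) (onA _ iM2t)) => //.
  rewrite -(mart1.2 t T t0 tT (lexx T) A FA) -(mart2.2 t T t0 tT (lexx T) A FA).
  apply: le_integral => //; [exact: onA iM1T|exact: onA iM2T|].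
  by move=> w _; rewrite lee_fin.
have -> : [set w | M1 t w <= M2 t w] = ~` A.
  by apply/seteqP; split => w /=; rewrite /A /= ltNge; case: (M1 t w <= M2 t w).
by rewrite probability_setC // QA0 sube0.
Qed.

End martingale_comparison.

Lemma bond_price_maturity {d : measure_display} {Omega : measurableType d}
    {R : realType} (L : R -> Omega -> R) (f : R -> R -> R -> Omega -> R)
    (T eta : R) (w : Omega) :
  bond_price L f T T eta w = (L T w <= eta)%R%:R.
Proof. by rewrite /bond_price set_itv1 Rintegral_set1 oppr0 expR0 mulr1. Qed.

Lemma discount_factor_gt0 {d : measure_display} {Omega : measurableType d}
    {R : realType} (r : R -> Omega -> R) (t : R) (w : Omega) :
  0 < discount_factor r t w.
Proof. exact: expR_gt0. Qed.

Theorem mainTheorem9 (d : measure_display) (Omega : measurableType d)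
  (R : realType) (Q : probability Omega R) (F : R -> set (set Omega))
  (L r : R -> Omega -> R) (f : R -> R -> R -> Omega -> R)
  (eta1 eta2 T : R) :
  filtration F ->
  adapted F L ->
  cadlag L ->
  (forall w s t, 0 <= s -> s <= t -> L s w <= L t w) ->
  (forall w t, 0 <= t -> 0 <= L t w <= 1) ->
  pure_jump L ->
  progressive F r ->
  paths_locally_integrable r ->
  0 <= eta1 -> eta1 <= eta2 -> eta2 <= 1 -> 0 <= T ->
  martingale_on Q F T (fun t w => discount_factor r t w * bond_price L f t T eta1 w) ->
  martingale_on Q F T (fun t w => discount_factor r t w * bond_price L f t T eta2 w) ->
  forall t, 0 <= t <= T ->
    Q [set w | bond_price L f t T eta1 w <= bond_price L f t T eta2 w] = 1%E.
Proof.
move=> hF _ _ _ _ _ _ _ _ le_eta _ _ mart1 mart2 t tT.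
have leT w : discount_factor r T w * bond_price L f T T eta1 w <=
             discount_factor r T w * bond_price L f T T eta2 w.
  rewrite ler_pM2l ?discount_factor_gt0 // !bond_price_maturity ler_nat.
  by case: (boolP (L T w <= eta1)) => // /le_trans ->.
rewrite -(martingale_le_terminal _ _ _ _ _ hF mart1 mart2 leT t tT).
by apply: congr1; apply/funext => w /=; rewrite ler_pM2l ?discount_factor_gt0.
Qed.
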